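(* Let $G=(V,E)$ be a non-empty finite simple graph with no isolated vertices and no isolated edges, and let $A$ be any set of vertices of $G$ each of which is adjacent to a vertex of degree $1$. Then \[ D_G(x)=\sum_{J\subseteq V\setminus A}(-1)^{|J|}(x+1)^{|V|-|N_G[J]|}=\sum_{\substack{J\subseteq V\setminus A\\|J|\le|V|-\delta(G)}}(-1)^{|J|}\Big[(x+1)^{|V|-|N_G[J]|}-1\Big]. \]
   Context: The domination polynomial is $D_G(x)=\sum_{k=0}^{|V|}d_k(G)x^k$, where $d_k(G)$ is the number of dominating sets of $G$ of cardinality $k$ (a set $S$ is dominating if every vertex not in $S$ is adjacent to a vertex of $S$). $N_G[J]$ is the closed neighbourhood of $J$ (vertices in $J$ or adjacent to a vertex of $J$), and $\delta(G)$ is the minimum degree. An isolated edge is an edge both of whose endpoints have degree $1$. *)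

From mathcomp Require Import all_boot all_order all_algebra.
Set Implicit Arguments. Unset Strict Implicit. Unset Printing Implicit Defensive.
Import GRing.Theory.

Section Graphs.
Variable T : finType.
Variable e : rel T.

Definition simple_graph : Prop := symmetric e /\ irreflexive e.

Definition nbhd (v : T) : {set T} := [set u | e v u].
Definition deg (v : T) : nat := #|nbhd v|.

Definition cnbhd (J : {set T}) : {set T} :=
  [set u | (u \in J) || [exists j in J, e j u]].

Definition dominating (S : {set T}) : bool :=
  [forall v, (v \in S) || [exists u in S, e v u]].

Definition dom_count (k : nat) : nat :=
  #|[set S : {set T} | dominating S & #|S| == k]|.

Definition dom_poly : {poly int} :=
  \sum_(k < #|T|.+1) (dom_count k)%:R *: 'X^k.

(* minimum degree delta(G); the initial value #|T| exceeds every degree,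
   so for a non-empty vertex set this is exactly min_v deg v *)
Definition min_deg : nat := \big[minn/#|T|]_(v : T) deg v.

Definition no_isolated_vertices : Prop := forall v : T, 0 < deg v.

Definition no_isolated_edges : Prop :=
  forall u v : T, e u v -> ~ (deg u = 1 /\ deg v = 1)%N.

End Graphs.

From mathcomp Require Import all_boot all_order all_algebra.
From mathcomp Require Import zify.
Import Order.TTheory GRing.Theory.
Set Implicit Arguments. Unset Strict Implicit. Unset Printing Implicit Defensive.
Local Open Scope ring_scope.

(* Every vertex of [A] has a leaf neighbour outside [A], and the leaf can only
   be dominated through itself or its neighbour in [A]; so a set dominates [G]
   iff it dominates [V \ A].  Expanding the indicator of the latter as
   [\prod_(v in V \ A) (1 - [v not dominated])] gives a signed sum over
   [J \subset V \ A] in which the sets [S] avoiding [N[J]] contribute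
   [(x + 1) ^ (|V| - |N[J]|)].  For the second formula, the terms with
   [|J| > |V| - delta] vanish because then [N[J] = V], and the signs
   [\sum_(J \subset V \ A) (-1)^|J| = 0] since [V \ A] is non-empty. *)

Section SubsetSums.
Variables (I : finType) (R : comPzRingType).

Lemma prod_add1_subsets (B : {set I}) (F : I -> R) :
  \prod_(i in B) (F i + 1) = \sum_(J : {set I} | J \subset B) \prod_(i in J) F i.
Proof.
pose FB i := if i \in B then F i else 0.
transitivity (\prod_i (FB i + 1)).
  by rewrite big_mkcond; apply: eq_bigr => i _; rewrite /FB; case: ifP; rewrite ?add0r.
rewrite bigA_distr [RHS]big_mkcond; apply: eq_bigr => J _.
rewrite -big_mkcond; case: (boolP (J \subset B)) => [sJB | /subsetPn[i iJ niB]].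
  by apply: eq_bigr => i iJ; rewrite /FB (subsetP sJB).
by rewrite (bigD1 i) //= /FB (negbTE niB) mul0r.
Qed.

Lemma sum_subsets_exp_card (B : {set I}) (x : R) :
  \sum_(S : {set I} | S \subset B) x ^+ #|S| = (x + 1) ^+ #|B|.
Proof.
rewrite -prodr_const prod_add1_subsets.
by apply: eq_bigr => S _; rewrite prodr_const.
Qed.

Lemma prod_indicator (J C : {set I}) :
  \prod_(i in J) ((i \in C)%:R : R) = (J \subset C)%:R.
Proof.
case: (boolP (J \subset C)) => [sJC | /subsetPn[i iJ niC]].
  by rewrite big1 // => i iJ; rewrite (subsetP sJC).
by rewrite (bigD1 i) //= (negbTE niC) mul0r.
Qed.

(* Inclusion-exclusion for the indicator of [B \subset C], expanding
   [\prod_(i in B) (1 - [i \notin C])]. *)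
Lemma indicator_subset_incl_excl (B C : {set I}) :
  ((B \subset C)%:R : R) =
    \sum_(J : {set I} | J \subset B) (-1) ^+ #|J| * (J \subset ~: C)%:R.
Proof.
rewrite -prod_indicator.
transitivity (\prod_(i in B) (- ((i \in ~: C)%:R : R) + 1)).
  by apply: eq_bigr => i _; rewrite inE; case: (i \in C); rewrite /= ?oppr0 ?add0r ?addNr.
rewrite prod_add1_subsets; apply: eq_bigr => J _.
by rewrite -prod_indicator -prodr_const -big_split; apply: eq_bigr => i _; rewrite /= mulN1r.
Qed.

End SubsetSums.

Lemma dom_polyE (T : finType) (e : rel T) :
  dom_poly e = \sum_(S : {set T} | dominating e S) 'X^#|S|.
Proof.
rewrite /dom_poly (partition_big (fun S : {set T} => inord #|S| : 'I_#|T|.+1) xpredT) //=.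
apply: eq_bigr => k _; rewrite /dom_count scaler_nat -sumr_const.
have inord_card (S : {set T}) : (inord #|S| == k :> 'I_#|T|.+1) = (#|S| == k).
  by rewrite -val_eqE /= inordK // ltnS max_card.
apply: eq_big => S; first by rewrite inE inord_card.
by rewrite inE => /andP[_ /eqP ->].
Qed.

Section SymmetricGraph.
Variables (T : finType) (e : rel T).
Hypothesis e_sym : symmetric e.

Lemma mem_cnbhd (S : {set T}) v :
  (v \in cnbhd e S) = (v \in S) || [exists u in S, e v u].
Proof.
rewrite inE; congr (_ || _); apply: eq_existsb => u.
by rewrite e_sym.
Qed.

Lemma dominatingE (S : {set T}) : dominating e S = ([set: T] \subset cnbhd e S).
Proof.
apply/forallP/subsetP => [dom v _ | sub v]; first by rewrite mem_cnbhd dom.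
by rewrite -mem_cnbhd sub ?inE.
Qed.

Lemma subsetC_cnbhdW (J S : {set T}) :
  J \subset ~: cnbhd e S -> S \subset ~: cnbhd e J.
Proof.
move=> /subsetP sub; apply/subsetP => s sS; rewrite inE mem_cnbhd negb_or.
apply/andP; split.
  by apply/negP => /sub; rewrite inE mem_cnbhd sS.
apply/negP => /existsP[j /andP[jJ esj]]; move: (sub j jJ).
rewrite inE mem_cnbhd => /negP; apply; apply/orP; right.
by apply/existsP; exists s; rewrite sS e_sym.
Qed.

Lemma subsetC_cnbhd_sym (J S : {set T}) :
  (J \subset ~: cnbhd e S) = (S \subset ~: cnbhd e J).
Proof. by apply/idP/idP; apply: subsetC_cnbhdW. Qed.

Lemma leaf_nbhd a w : e a w -> deg e w = 1%N -> nbhd e w = [set a].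
Proof.
move=> eaw /eqP/cards1P[x nw]; rewrite nw.
have : a \in nbhd e w by rewrite inE e_sym.
by rewrite nw inE => /eqP ->.
Qed.

Hypothesis e_irr : irreflexive e.

(* A vertex outside [N[J]] has its [deg v >= min_deg] neighbours and itself
   outside [J], so [#|J| + min_deg + 1 <= #|T|]. *)
Lemma cnbhd_full (J : {set T}) :
  (#|T| - min_deg e < #|J|)%N -> cnbhd e J = [set: T].
Proof.
move=> large; apply/setP => v; rewrite in_setT; apply: contraT.
rewrite mem_cnbhd negb_or => /andP[nvJ /existsPn nJv].
have min_deg_le : (min_deg e <= deg e v)%N by exact: (@bigmin_le _ nat T _ v).
have disj : J :&: nbhd e v = set0.
  by apply/setP => u; rewrite !inE; apply/negbTE/nJv.
have sub : J :|: nbhd e v \subset ~: [set v].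
  apply/subsetP => u; rewrite !inE; apply: contraL => /eqP ->.
  by rewrite negb_or nvJ e_irr.
have := subset_leq_card sub; rewrite cardsU disj cards0 subn0 cardsC1 -/(deg e v).
lia.
Qed.

End SymmetricGraph.

Section LeafNeighbours.
Variables (T : finType) (e : rel T) (A : {set T}).
Hypothesis e_sym : symmetric e.
Hypothesis no_iso_edges : no_isolated_edges e.
Hypothesis A_leaf : forall a, a \in A -> exists2 w : T, e a w & deg e w = 1%N.

Lemma leaf_notin a w : a \in A -> e a w -> deg e w = 1%N -> w \notin A.
Proof.
move=> aA eaw dw; apply/negP => /A_leaf[w' eww' dw'].
have : w' \in nbhd e w by rewrite inE.
rewrite (leaf_nbhd e_sym eaw dw) inE => /eqP ew'a; subst w'.
exact: (no_iso_edges eaw (conj dw' dw)).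
Qed.

(* A vertex of [A] is dominated as soon as its leaf neighbour, which lies
   outside [A], is. *)
Lemma dominating_setC (S : {set T}) :
  dominating e S = (~: A \subset cnbhd e S).
Proof.
rewrite dominatingE //; apply/idP/idP => [/subsetP sub | /subsetP sub].
  by apply/subsetP => v _; rewrite sub ?inE.
apply/subsetP => v _; case: (boolP (v \in A)) => [vA | nvA]; last by rewrite sub ?inE.
have [w evw dw] := A_leaf vA.
have := sub w; rewrite inE (leaf_notin vA evw dw) mem_cnbhd // => /(_ isT).
case/orP => [wS | /existsP[u /andP[uS ewu]]].
  by rewrite mem_cnbhd //; apply/orP; right; apply/existsP; exists w; rewrite wS evw.
have : u \in nbhd e w by rewrite inE.
by rewrite (leaf_nbhd e_sym evw dw) inE => /eqP uv; rewrite -uv inE uS.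
Qed.

Lemma card_setC_gt0 : (0 < #|T|)%N -> (0 < #|~: A|)%N.
Proof.
move=> /card_gt0P[v _]; apply/card_gt0P.
case: (boolP (v \in A)) => [vA | nvA]; last by exists v; rewrite inE.
have [w evw dw] := A_leaf vA.
by exists w; rewrite inE (leaf_notin vA evw dw).
Qed.

Lemma dom_poly_incl_excl :
  dom_poly e = \sum_(J : {set T} | J \subset ~: A)
       (-1) ^+ #|J| * ('X + 1) ^+ (#|T| - #|cnbhd e J|).
Proof.
rewrite dom_polyE big_mkcond /=.
under eq_bigr => S _ do
  rewrite dominating_setC -mulrb -mulr_natr indicator_subset_incl_excl mulr_sumr.
rewrite exchange_big /=; apply: eq_bigr => J _.
under eq_bigr => S _ do rewrite subsetC_cnbhd_sym // mulrCA mulr_natr mulrb.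
rewrite -mulr_sumr -big_mkcond sum_subsets_exp_card.
by rewrite -(cardsC (cnbhd e J)) addKn.
Qed.

Hypothesis e_irr : irreflexive e.

Lemma dom_poly_incl_excl_small : (0 < #|T|)%N ->
  dom_poly e =
    \sum_(J : {set T} | (J \subset ~: A) && (#|J| <= #|T| - min_deg e)%N)
       (-1) ^+ #|J| * (('X + 1) ^+ (#|T| - #|cnbhd e J|) - 1).
Proof.
move=> T_gt0.
have signs_vanish : \sum_(J : {set T} | J \subset ~: A) (-1) ^+ #|J| = 0 :> {poly int}.
  by rewrite sum_subsets_exp_card addNr expr0n eqn0Ngt card_setC_gt0.
rewrite dom_poly_incl_excl -[LHS]subr0 -[X in _ - X]signs_vanish -sumrB big_mkcondr /=.
apply: eq_bigr => J _; rewrite -[X in _ - X]mulr1 -mulrBr.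
case: leqP => // /(cnbhd_full e_sym e_irr) ->.
by rewrite cardsT subnn subrr mulr0.
Qed.

End LeafNeighbours.

Theorem corollary5 (T : finType) (e : rel T) (A : {set T}) :
  simple_graph e ->
  (0 < #|T|)%N ->
  no_isolated_vertices e ->
  no_isolated_edges e ->
  (forall a, a \in A -> exists2 w : T, e a w & deg e w = 1%N) ->
  dom_poly e =
    \sum_(J : {set T} | J \subset ~: A)
       (-1) ^+ #|J| * ('X + 1) ^+ (#|T| - #|cnbhd e J|)
  /\
  dom_poly e =
    \sum_(J : {set T} | (J \subset ~: A) && (#|J| <= #|T| - min_deg e)%N)
       (-1) ^+ #|J| * (('X + 1) ^+ (#|T| - #|cnbhd e J|) - 1).
Proof.
(* Isolated vertices would not affect either formula. *)
move=> [e_sym e_irr] T_gt0 _ no_iso_edges A_leaf.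
split; first exact: dom_poly_incl_excl.
exact: dom_poly_incl_excl_small.
Qed.
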